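(* Consider the problem and algorithm AC2CD described in the context (including the additional requirement on $A^{k,i}$), and assume that $f$ is convex over $\mathbb{R}^n$. Let $f^*$ be the optimal value of the problem and define \[ K=\max\Bigl\{\frac1{A_l},\frac{L^{\max}}{2\delta(1-\gamma)}\Bigr\}R_0+2\hat L R_0+G^*. \] Then at every outer iteration $k$, \[ f(x^k)-f(x^{k+1})\ge\frac{\gamma\,(f(x^{k+1})-f^* )^2}{A_u(n-1)K^2}. \]
   Context: Problem: minimize $f(x)$ subject to $e^T x = b$ and $l_i \le x_i \le u_i$ ($i=1,\dots,n$), where $n\ge 2$, $e$ is the all-ones vector, $b\in\mathbb{R}$, $l_i\in\mathbb{R}\cup\{-\infty\}$, $u_i\in\mathbb{R}\cup\{+\infty\}$, $l_i<u_i$, and $f:\mathbb{R}^n\to\mathbb{R}$ is continuously differentiable with $\nabla f$ Lipschitz continuous on $\mathbb{R}^n$. $\mathcal F$ is the feasible set, $e_i$ the $i$th unit vector. For $i\ne j$, $L_{i,j}>0$ are fixed constants such that for every $x\in\mathbb{R}^n$ and $s,t\in\mathbb{R}$, $|\nabla f(x+s(e_i-e_j))^T(e_i-e_j)-\nabla f(x+t(e_i-e_j))^T(e_i-e_j)|\le L_{i,j}|s-t|$; $L_{i,i}=0$; $L^{\max}=\max_{i,j}L_{i,j}$; $L_j=\sum_{i=1}^nL_{i,j}$; $\hat L=\max_jL_j$. $\|x\|_{\langle j\rangle}=\sqrt{\sum_{i\ne j}x_i^2}$. For $x\in\mathcal F$, $D_h(x)=\min\{x_h-l_h,u_h-x_h\}$.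 A point $x^*\in\mathcal F$ is stationary iff there is $\lambda^*\in\mathbb{R}$ with $\nabla_i f(x^* )\ge\lambda^*$ if $x^*_i=l_i$, $=\lambda^*$ if $l_i<x^*_i<u_i$, $\le\lambda^*$ if $x^*_i=u_i$; $X^*$ is the set of stationary points. With $\mathcal L_0=\{x\in\mathcal F: f(x)\le f(x^0)\}$, define $R_0=\max\{\|x-x^*\|_{\langle j\rangle}: j\in\{1,\dots,n\},\ x\in\mathcal L_0,\ x^*\in X^*\}$ and $G^*=\max\{\nabla_jf(x^* )-\nabla_if(x^* ): i,j\in\{1,\dots,n\},\ x^*\in X^*\}$. Algorithm AC2CD with parameters $\tau\in(0,1]$, $\gamma,\delta\in(0,1)$, $0<A_l\le A_u<\infty$ and starting point $x^0\in\mathcal F$: for $k=0,1,2,\dots$: let $D^k=\max_h D_h(x^k)$; choose $j(k)$ with $D_{j(k)}(x^k)\ge\tau D^k$; choose a permutation $(p^k_1,\dots,p^k_n)$ of $\{1,\dots,n\}$; set $z^{k,1}=x^k$; for $i=1,\dots,n$ (inner iteration $(k,i)$): $g^{k,i}=\nabla_{j(k)}f(z^{k,i})-\nabla_{p^k_i}f(z^{k,i})$, $d^{k,i}=g^{k,i}(e_{p^k_i}-e_{j(k)})$; $\bar\alpha^{k,i}=\min\{u_{p^k_i}-z^{k,i}_{p^k_i},z^{k,i}_{j(k)}-l_{j(k)}\}/g^{k,i}$ if $g^{k,i}>0$, $=\min\{z^{k,i}_{p^k_i}-l_{p^k_i},u_{j(k)}-z^{k,i}_{j(k)}\}/|g^{k,i}|$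 if $g^{k,i}<0$, $=0$ if $g^{k,i}=0$; choose $A^{k,i}\in[A_l,A_u]$, set $\Delta^{k,i}=\min\{\bar\alpha^{k,i},A^{k,i}\}$; starting from $\alpha=\Delta^{k,i}$, while $f(z^{k,i}+\alpha d^{k,i})>f(z^{k,i})+\gamma\alpha\nabla f(z^{k,i})^Td^{k,i}$ replace $\alpha$ by $\delta\alpha$; $\alpha^{k,i}$ is the final $\alpha$ and $z^{k,i+1}=z^{k,i}+\alpha^{k,i}d^{k,i}$. Then $x^{k+1}=z^{k,n+1}$. Additional requirement: the values $A^{k,i}\in[A_l,A_u]$ are chosen so that $l_{j(k)}<z^{k,i}_{j(k)}<u_{j(k)}$ for all $k\ge0$ and $i=1,\dots,n+1$. Standing assumptions: $\mathcal L_0$ is nonempty and compact, and every $x\in\mathcal L_0$ has some index $i$ with $l_i<x_i<u_i$. *)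

From HB Require Import structures.
From mathcomp Require Import all_boot all_order all_algebra.
From mathcomp Require Import all_classical all_reals ereal.
Set Implicit Arguments. Unset Strict Implicit. Unset Printing Implicit Defensive.
Import Order.TTheory GRing.Theory Num.Theory.
Local Open Scope ring_scope.

Section Defs.
Variable R : realType.
Variable n : nat.
Notation vec := ('I_n -> R).

Definition vadd (x y : vec) : vec := fun i => x i + y i.
Definition vsub (x y : vec) : vec := fun i => x i - y i.
Definition vscale (a : R) (x : vec) : vec := fun i => a * x i.
Definition unitv (i : 'I_n) : vec := fun k => if k == i then 1 else 0.
Definition dirv (i j : 'I_n) : vec := fun k => unitv i k - unitv j k.
Definition dotv (x y : vec) : R := \sum_(i < n) x i * y i.
Definition normv (x : vec) : R := Num.sqrt (\sum_(i < n) x i ^+ 2).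
Definition normj (j : 'I_n) (x : vec) : R :=
  Num.sqrt (\sum_(i < n | i != j) x i ^+ 2).

Definition is_gradient (f : vec -> R) (grad : vec -> vec) : Prop :=
  forall x : vec, forall eps : R, 0 < eps -> exists2 dl : R, 0 < dl &
    forall h : vec, normv h < dl ->
      `|f (vadd x h) - f x - dotv (grad x) h| <= eps * normv h.

Definition lipschitz_grad (grad : vec -> vec) : Prop :=
  exists L : R, forall x y : vec, normv (vsub (grad x) (grad y)) <= L * normv (vsub x y).

Definition convex_fun (f : vec -> R) : Prop :=
  forall (x y : vec) (t : R), 0 <= t <= 1 ->
    f (vadd (vscale t x) (vscale (1 - t) y)) <= t * f x + (1 - t) * f y.

Definition pair_lip_consts (grad : vec -> vec) (Lc : 'I_n -> 'I_n -> R) : Prop :=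
  (forall i j : 'I_n, i != j -> 0 < Lc i j) /\
  (forall i : 'I_n, Lc i i = 0) /\
  (forall (i j : 'I_n) (x : vec) (s t : R), i != j ->
     `|dotv (grad (vadd x (vscale s (dirv i j)))) (dirv i j)
       - dotv (grad (vadd x (vscale t (dirv i j)))) (dirv i j)| <= Lc i j * `|s - t|).

Definition Lmax (Lc : 'I_n -> 'I_n -> R) : R :=
  \big[Num.max/0]_(i < n) \big[Num.max/0]_(j < n) Lc i j.
Definition Lcol (Lc : 'I_n -> 'I_n -> R) (j : 'I_n) : R := \sum_(i < n) Lc i j.
Definition Lhat (Lc : 'I_n -> 'I_n -> R) : R := \big[Num.max/0]_(j < n) Lcol Lc j.

Variables (b : R) (lo up : 'I_n -> \bar R).

Definition feasible (x : vec) : Prop :=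
  \sum_(i < n) x i = b /\ forall i, (lo i <= (x i)%:E <= up i)%E.

Definition stationary (grad : vec -> vec) (x : vec) : Prop :=
  feasible x /\ exists lam : R, forall i : 'I_n,
    ((x i)%:E = lo i -> lam <= grad x i) /\
    ((lo i < (x i)%:E < up i)%E -> grad x i = lam) /\
    ((x i)%:E = up i -> grad x i <= lam).

Definition Dh (x : vec) (h : 'I_n) : \bar R :=
  Order.min ((x h)%:E - lo h)%E (up h - (x h)%:E)%E.
Definition Dmax (x : vec) : \bar R := \big[Order.max/-oo%E]_(h < n) Dh x h.

(* \bar alpha^{k,i} for current point z, index p = p^k_i, j = j(k), g = g^{k,i} *)
Definition alphabar (z : vec) (p j : 'I_n) (g : R) : \bar R :=
  if 0 < g then (Order.min (up p - (z p)%:E) ((z j)%:E - lo j) * (g^-1)%:E)%E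
  else if g < 0 then (Order.min ((z p)%:E - lo p) (up j - (z j)%:E) * (`|g|^-1)%:E)%E
  else 0%E.

Definition armijo (f : vec -> R) (grad : vec -> vec) (gamma : R) (z d : vec) (a : R) : Prop :=
  f (vadd z (vscale a d)) <= f z + gamma * a * dotv (grad z) d.

(* One full run of AC2CD: x k = x^k, j k = j(k), p k = (p^k_1,...,p^k_n)
   (0-based), z k i = z^{k,i+1}, A k i = A^{k,i+1}, alpha k i = alpha^{k,i+1}. *)
Definition AC2CD_run (f : vec -> R) (grad : vec -> vec)
  (tau gamma delta Al Au : R) (x : nat -> vec) (j : nat -> 'I_n)
  (p : nat -> 'I_n -> 'I_n) (z : nat -> nat -> vec) (A alpha : nat -> nat -> R) : Prop :=
  forall k : nat,
    (tau%:E * Dmax (x k) <= Dh (x k) (j k))%E /\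
    injective (p k) /\
    z k 0%N = x k /\
    x k.+1 = z k n /\
    (forall i : 'I_n,
       let zi := z k i in
       let g := grad zi (j k) - grad zi (p k i) in
       let d := vscale g (dirv (p k i) (j k)) in
       let Delta := fine (Order.min (alphabar zi (p k i) (j k) g) (A k i)%:E) in
       Al <= A k i <= Au /\
       (exists m : nat,
          alpha k i = Delta * delta ^+ m /\
          armijo f grad gamma zi d (alpha k i) /\
          (forall m' : nat, (m' < m)%N -> ~ armijo f grad gamma zi d (Delta * delta ^+ m'))) /\
       z k i.+1 = vadd zi (vscale (alpha k i) d)) /\
    (* additional requirement on the A^{k,i} *)
    (forall i : nat, (i <= n)%N -> (lo (j k) < (z k i (j k))%:E < up (j k))%E).

Definition is_max_of (P : R -> Prop) (m : R) : Prop :=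
  P m /\ forall r, P r -> r <= m.

Definition is_opt_value (f : vec -> R) (fs : R) : Prop :=
  (forall y, feasible y -> fs <= f y) /\
  (forall e : R, 0 < e -> exists2 y, feasible y & f y < fs + e).

Definition in_L0 (f : vec -> R) (x0 y : vec) : Prop := feasible y /\ f y <= f x0.

Definition R0_set (f : vec -> R) (grad : vec -> vec) (x0 : vec) (r : R) : Prop :=
  exists (jj : 'I_n) (y xs : vec),
    in_L0 f x0 y /\ stationary grad xs /\ r = normj jj (vsub y xs).

Definition G_set (grad : vec -> vec) (r : R) : Prop :=
  exists (i jj : 'I_n) (xs : vec), stationary grad xs /\ r = grad xs jj - grad xs i.

End Defs.

From HB Require Import structures.
From mathcomp Require Import all_boot all_order all_algebra.
From mathcomp Require Import all_classical all_reals ereal.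
From mathcomp Require Import ring lra.
Import Order.TTheory GRing.Theory Num.Theory.
Set Implicit Arguments. Unset Strict Implicit. Unset Printing Implicit Defensive.
Local Open Scope ring_scope.

(* Convexity turns the Lipschitz bound on each directional derivative along [e_i - e_j] into a
   descent lemma and into co-coercivity, with no integration needed.  An inner step of AC2CD is
   either long, [|g| <= C |alpha g|] with [C = max (1/A_l) (L^max / (2 delta (1 - gamma)))]
   (the trial step [A] was accepted, or Armijo failed at [alpha / delta], which the descent
   lemma forbids for short steps), or it stops the moving coordinate at a bound beyond which no
   feasible point lies.  As [e^T (x^{k+1} - x^* ) = 0], the product
   [<grad f(x^{k+1}), x^{k+1} - x^*>] is a sum over [i <> j(k)] of gradient gaps
   [grad_i f - grad_j f]; for [i = p^k_m] the gap is [- g^{k,m}] plus its drift during the later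
   inner steps, which co-coercivity bounds by their step lengths.  Cauchy-Schwarz then gives
   [f(x^{k+1}) - f^* <= K |s|] for the vector [s] of step lengths [alpha g], while the Armijo
   conditions give [f(x^k) - f(x^{k+1}) >= gamma / A_u |s|^2]. *)

Section Vectors.
Context {R : realType} {n : nat}.
Implicit Types (u v w : 'I_n -> R).
Local Notation unitv := (@unitv R n).
Local Notation dirv := (@dirv R n).

Lemma dotvDr u v w : dotv u (vadd v w) = dotv u v + dotv u w.
Proof. by rewrite /dotv -big_split; apply: eq_bigr => i _; rewrite /vadd mulrDr. Qed.

Lemma dotvBr u v w : dotv u (vsub v w) = dotv u v - dotv u w.
Proof. by rewrite /dotv -sumrB; apply: eq_bigr => i _; rewrite /vsub mulrBr. Qed.

Lemma dotvZr u v a : dotv u (vscale a v) = a * dotv u v.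
Proof. by rewrite /dotv mulr_sumr; apply: eq_bigr => i _; rewrite /vscale mulrCA. Qed.

Lemma dotv_unitv u a : dotv u (unitv a) = u a.
Proof.
rewrite /dotv (bigD1 a) //= big1 ?addr0 /unitv ?eqxx ?mulr1 // => i /negbTE ->.
by rewrite mulr0.
Qed.

Lemma dotv_dirv u a c : dotv u (dirv a c) = u a - u c.
Proof. by rewrite -!dotv_unitv -dotvBr. Qed.

Lemma sum_dirv (a c : 'I_n) : \sum_i dirv a c i = 0.
Proof.
have sum_unitv e : \sum_i unitv e i = 1.
  by rewrite -(dotv_unitv (fun _ => 1) e); apply: eq_bigr => i _; rewrite mul1r.
by rewrite sumrB !sum_unitv subrr.
Qed.

Lemma dirv_coord (a c q : 'I_n) :
  dirv a c q = ((q == a)%:R - (q == c)%:R : R).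
Proof. by rewrite /dirv /unitv; case: (q == a); case: (q == c). Qed.

Lemma normvZ t v : normv (vscale t v) = `|t| * normv v.
Proof.
rewrite /normv /vscale; under eq_bigr do rewrite exprMn.
by rewrite -mulr_sumr sqrtrM ?sqr_ge0 // sqrtr_sqr.
Qed.

End Vectors.

Section CauchySchwarz.
Context {R : realType} {I : finType} (P : pred I).
Implicit Types u v w : I -> R.

Lemma cauchy_schwarz u v :
  (\sum_(i | P i) u i * v i) ^+ 2 <= (\sum_(i | P i) u i ^+ 2) * (\sum_(i | P i) v i ^+ 2).
Proof.
set A := \sum_(i | P i) u i ^+ 2; set B := \sum_(i | P i) v i ^+ 2.
set C := \sum_(i | P i) u i * v i.
have lagrange : \sum_(i | P i) \sum_(l | P l) (u i * v l - u l * v i) ^+ 2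
    = A * B + B * A - 2 * (C * C).
  rewrite !big_distrlr /= mulr_sumr -big_split /= -sumrB.
  apply: eq_bigr => i _; rewrite mulr_sumr -big_split /= -sumrB.
  by apply: eq_bigr => l _; ring.
have : 0 <= A * B + B * A - 2 * (C * C).
  by rewrite -lagrange; do 2!apply: sumr_ge0 => ? _; exact: sqr_ge0.
rewrite expr2; lra.
Qed.

Lemma cauchy_schwarz_abs u v :
  \sum_(i | P i) `|u i| * `|v i| <=
    Num.sqrt (\sum_(i | P i) u i ^+ 2) * Num.sqrt (\sum_(i | P i) v i ^+ 2).
Proof.
have sum_sqr_ge0 w : 0 <= \sum_(i | P i) w i ^+ 2 by apply: sumr_ge0 => i _; exact: sqr_ge0.
have sum_ge0 : 0 <= \sum_(i | P i) `|u i| * `|v i| by apply: sumr_ge0 => i _; rewrite mulr_ge0.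
rewrite -sqrtrM // -(ger0_norm sum_ge0) -sqrtr_sqr ler_sqrt ?mulr_ge0 //.
apply: le_trans (cauchy_schwarz _ _) _.
have norm_sqr w : \sum_(i | P i) `|w i| ^+ 2 = \sum_(i | P i) w i ^+ 2.
  by apply: eq_bigr => i _; rewrite real_normK ?num_real.
by rewrite !norm_sqr.
Qed.

End CauchySchwarz.

Section SlopeDescent.
Context {R : realType} (phi psi : R -> R) (L : R).
Hypothesis phi_slope : forall a c, phi c - phi a <= (c - a) * psi c.
Hypothesis psi_lipschitz : forall s t, `|psi s - psi t| <= L * `|s - t|.

Lemma lipschitz_const_ge0 : 0 <= L.
Proof.
by have := psi_lipschitz 1 0; rewrite subr0 normr1 mulr1; apply: le_trans.
Qed.

(* Riemann sum of [psi] on [N.+1] equal subintervals of [0, s], each taken at its right end. *)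
Lemma slope_descent_mesh s (N : nat) :
  phi s - phi 0 - s * psi 0 <= L * s ^+ 2 / 2 + L * s ^+ 2 / (2 * N.+1%:R).
Proof.
have partial (h : R) k : phi (k%:R * h) - phi 0 <=
    k%:R * h * psi 0 + L * h ^+ 2 * (k%:R * (k%:R + 1)) / 2.
  elim: k => [|k IH]; first by rewrite mul0r subrr !mul0r mulr0 mul0r addr0.
  have step_len : k.+1%:R * h - k%:R * h = h by rewrite -natr1; ring.
  have := phi_slope (k%:R * h) (k.+1%:R * h); rewrite step_len => step.
  have psi_step : h * (psi (k.+1%:R * h) - psi 0) <= L * h ^+ 2 * k.+1%:R.
    apply: le_trans (ler_norm _) _; rewrite normrM.
    apply: le_trans (ler_wpM2l (normr_ge0 h) (psi_lipschitz _ _)) _.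
    rewrite subr0 normrM normr_nat -(real_normK (num_real h)).
    by rewrite le_eqVlt; apply/orP; left; apply/eqP; ring.
  move: step psi_step IH; rewrite -natr1.
  move: (psi _) (phi _) (phi (k%:R * h)) => p1 f1 f0 step psi_step IH.
  have -> : (k%:R + 1) * h * psi 0 + L * h ^+ 2 * ((k%:R + 1) * (k%:R + 1 + 1)) / 2
    = k%:R * h * psi 0 + L * h ^+ 2 * (k%:R * (k%:R + 1)) / 2 + h * psi 0
      + L * h ^+ 2 * (k%:R + 1) by field.
  lra.
have N_neq0 : N.+1%:R != 0 :> R by rewrite pnatr_eq0.
have := partial (s / N.+1%:R) N.+1; rewrite mulrC divfK //.
have -> : L * (s / N.+1%:R) ^+ 2 * (N.+1%:R * (N.+1%:R + 1)) / 2
  = L * s ^+ 2 / 2 + L * s ^+ 2 / (2 * N.+1%:R) by field.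
by move=> mesh; rewrite lerBlDl.
Qed.

Lemma slope_descent s : phi s <= phi 0 + s * psi 0 + L * s ^+ 2 / 2.
Proof.
apply/ler_addgt0Pr => e e_gt0.
have L_ge0 := lipschitz_const_ge0.
set q := L * s ^+ 2 / (2 * e).
have q_ge0 : 0 <= q.
  by apply: divr_ge0; apply: mulr_ge0 => //; [exact: sqr_ge0 | exact: ltW].
have q_lt := archi_boundP q_ge0; set N := Num.Def.archi_bound q in q_lt.
have small : L * s ^+ 2 / (2 * N.+1%:R) <= e.
  rewrite ler_pdivrMr ?mulr_gt0 ?ltr0n //.
  have -> : L * s ^+ 2 = q * (2 * e) by rewrite /q divfK // gt_eqF // mulr_gt0.
  have : q <= N.+1%:R by apply: ltW (lt_le_trans q_lt _); rewrite ler_nat.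
  clearbody q N; nra.
have := slope_descent_mesh s N; move: small.
set c := L * s ^+ 2 / (2 * _); set d := L * s ^+ 2 / 2; lra.
Qed.

End SlopeDescent.

Section Feasible.
Context {R : realType} {n : nat} {b : R} {lo up : 'I_n -> \bar R}.
Local Notation vec := ('I_n -> R).
Local Notation feasible := (feasible b lo up).

Lemma sum_vsub_feasible (x y : vec) : feasible y -> feasible x -> \sum_i vsub y x i = 0.
Proof. by move=> [sum_y _] [sum_x _]; rewrite sumrB sum_y sum_x subrr. Qed.

Lemma dotv_sum0 (u d : vec) (J : 'I_n) : \sum_i d i = 0 ->
  dotv u d = \sum_(i | i != J) (u i - u J) * d i.
Proof.
move=> d_sum0; have -> : dotv u d = \sum_i (u i - u J) * d i.
  under [RHS]eq_bigr do rewrite mulrBl.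
  by rewrite sumrB -mulr_sumr d_sum0 mulr0 subr0.
by rewrite (bigD1 J) //= subrr mul0r add0r.
Qed.

(* Shifting [grad xs] by the multiplier makes every term of the sum nonnegative. *)
Lemma stationary_dotv_ge0 (grad : vec -> vec) (xs y : vec) :
  stationary b lo up grad xs -> feasible y -> 0 <= dotv (grad xs) (vsub y xs).
Proof.
move=> [xs_feas [lam xs_kkt]] y_feas.
have -> : dotv (grad xs) (vsub y xs) = \sum_i (grad xs i - lam) * vsub y xs i.
  under [RHS]eq_bigr do rewrite mulrBl.
  by rewrite sumrB -mulr_sumr sum_vsub_feasible // mulr0 subr0.
apply: sumr_ge0 => i _; have [at_lo [inside at_up]] := xs_kkt i.
have /andP[lo_y y_up] := y_feas.2 i; have /andP[lo_xs xs_up] := xs_feas.2 i.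
have [xs_lo|xs_nlo] := eqVneq (xs i)%:E (lo i).
  by rewrite mulr_ge0 // subr_ge0 ?at_lo // -lee_fin xs_lo.
have [xs_upE|xs_nup] := eqVneq (xs i)%:E (up i).
  by rewrite mulr_le0 // subr_le0 ?at_up // -lee_fin xs_upE.
by rewrite inside ?subrr ?mul0r // !lt_neqAle lo_xs xs_up eq_sym xs_nlo xs_nup.
Qed.

End Feasible.

Section ConvexGradient.
Context {R : realType} {n : nat} (f : ('I_n -> R) -> R) (grad : ('I_n -> R) -> 'I_n -> R).
Local Notation vec := ('I_n -> R).
Hypothesis f_grad : is_gradient f grad.
Hypothesis f_convex : convex_fun f.

Lemma convex_grad_ineq (x y : vec) : f x + dotv (grad x) (vsub y x) <= f y.
Proof.
set h := vsub y x; set N := normv h.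
have N_ge0 : 0 <= N := sqrtr_ge0 _.
have slope_le (eps : R) : 0 < eps -> dotv (grad x) h <= f y - f x + eps * N.
  move=> eps_gt0; have [dl dl_gt0 dl_small] := f_grad x eps_gt0.
  pose t := Num.min 1 (dl / (N + 1)).
  have t_gt0 : 0 < t by rewrite lt_min ltr01 divr_gt0 // ltr_wpDl.
  have t_le1 : t <= 1 by rewrite ge_min lexx.
  have th_small : normv (vscale t h) < dl.
    rewrite normvZ (gtr0_norm t_gt0); apply: le_lt_trans (_ : dl / (N + 1) * N < dl).
      by apply: ler_wpM2r => //; rewrite ge_min lexx orbT.
    by rewrite mulrAC ltr_pdivrMr ?ltr_wpDl // ltr_pM2l // ltrDl.
  have := dl_small _ th_small; rewrite normvZ (gtr0_norm t_gt0) dotvZr => /ler_normlP [lower _].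
  have chord : f (vadd x (vscale t h)) <= t * f y + (1 - t) * f x.
    have -> : vadd x (vscale t h) = vadd (vscale t y) (vscale (1 - t) x).
      by apply/funext => i; rewrite /vadd /vscale /h /vsub; ring.
    by apply: f_convex; rewrite ltW.
  have : t * (dotv (grad x) h - (f y - f x) - eps * N) <= 0.
    move: lower chord; rewrite -/N; set F := f _; lra.
  by rewrite pmulr_rle0 // => ?; lra.
rewrite -lerBrDl; apply/ler_addgt0Pr => e e_gt0.
apply: le_trans (slope_le (e / (N + 1)) _) _; first by rewrite divr_gt0 ?ltr_wpDl.
rewrite lerD2l mulrAC ler_pdivrMr ?ltr_wpDl //; nra.
Qed.

Section Direction.
Variables (w : vec) (L : R).
Hypothesis dgrad_lipschitz : forall (x : vec) (s t : R),
  `|dotv (grad (vadd x (vscale s w))) w - dotv (grad (vadd x (vscale t w))) w|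
    <= L * `|s - t|.

Lemma descent_lemma (x : vec) (s : R) :
  f (vadd x (vscale s w)) <= f x + s * dotv (grad x) w + L * s ^+ 2 / 2.
Proof.
have x_shift0 : vadd x (vscale 0 w) = x.
  by apply/funext => i; rewrite /vadd /vscale mul0r addr0.
rewrite -{2 3}x_shift0.
apply: (slope_descent (phi := fun t => f (vadd x (vscale t w)))
  (psi := fun t => dotv (grad (vadd x (vscale t w))) w)) => // a c.
have := convex_grad_ineq (vadd x (vscale c w)) (vadd x (vscale a w)).
have -> : vsub (vadd x (vscale a w)) (vadd x (vscale c w)) = vscale (a - c) w.
  by apply/funext => i; rewrite /vsub /vadd /vscale; ring.
rewrite dotvZr; lra.
Qed.

(* Co-coercivity along [w]: test the gradient inequality at [x] against the descent step from [y] *)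
Lemma sqr_dgrad_le_bregman (x y : vec) : 0 < L ->
  (dotv (grad y) w - dotv (grad x) w) ^+ 2
    <= 2 * L * (f y - f x - dotv (grad x) (vsub y x)).
Proof.
move=> L_gt0; have L_neq0 : L != 0 by rewrite gt_eqF.
set gy := dotv (grad y) w; set gx := dotv (grad x) w.
set t := (gy - gx) / L; set Q := (gy - gx) ^+ 2 / (2 * L).
have := convex_grad_ineq x (vadd y (vscale (- t) w)).
have -> : vsub (vadd y (vscale (- t) w)) x = vadd (vsub y x) (vscale (- t) w).
  by apply/funext => i; rewrite /vsub /vadd /vscale; ring.
rewrite dotvDr dotvZr -/gx.
have := descent_lemma y (- t); rewrite -/gy.
have -> : L * (- t) ^+ 2 / 2 = Q by rewrite /t /Q; field.
have gap : t * gy - t * gx = 2 * Q by rewrite /t /Q; field.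
have -> : (gy - gx) ^+ 2 = 2 * L * Q by rewrite /Q; field.
move: gap; set F := f _; set D := dotv _ _ => gap descent grad_ineq.
rewrite ler_pM2l ?mulr_gt0 //; lra.
Qed.

End Direction.

Lemma stationary_min (b : R) (lo up : 'I_n -> \bar R) (xs y : vec) :
  stationary b lo up grad xs -> feasible b lo up y -> f xs <= f y.
Proof.
move=> xs_stat y_feas; have := convex_grad_ineq xs y.
have := stationary_dotv_ge0 xs_stat y_feas; lra.
Qed.
End ConvexGradient.

Section EFinShift.
Context {R : realType}.
Local Open Scope ereal_scope.
Implicit Types (e : \bar R) (a r : R).

Lemma lee_EFin_subl e a r : (r%:E <= e - a%:E) = ((a + r)%:E <= e).
Proof. by rewrite leeBrDr // -EFinD addrC. Qed.

Lemma lee_EFin_subr e a r : (r%:E <= a%:E - e) = (e <= (a - r)%:E).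
Proof.
by case: e => [u| |] //=; rewrite ?leey ?leNye // -EFinB !lee_fin lerBrDl lerBrDr addrC.
Qed.

Lemma lee_subl_EFin e a r : (e - a%:E <= r%:E) = (e <= (a + r)%:E).
Proof. by rewrite leeBlDr // -EFinD addrC. Qed.

Lemma lee_subr_EFin e a r : (a%:E - e <= r%:E) = ((a - r)%:E <= e).
Proof.
by case: e => [u| |] //=; rewrite ?leey ?leNye // -EFinB !lee_fin lerBlDl lerBlDr addrC.
Qed.

End EFinShift.

Section Move.
Context {R : realType} {n : nat} (b : R) (lo up : 'I_n -> \bar R).
Local Notation vec := ('I_n -> R).
Local Notation feasible := (feasible b lo up).
Local Notation alphabar := (alphabar lo up).
Local Notation dirv := (@dirv R n).
Implicit Types (z y : vec) (P J : 'I_n) (g al s : R).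

Lemma le_alphabar_pos z P J g al : 0 < g ->
  (al%:E <= alphabar z P J g)%E
    = ((z P + al * g)%:E <= up P)%E && (lo J <= (z J - al * g)%:E)%E.
Proof.
by move=> g_gt0; rewrite /alphabar g_gt0 lee_pdivlMr // -EFinM le_min lee_EFin_subl lee_EFin_subr.
Qed.

Lemma le_alphabar_neg z P J g al : g < 0 ->
  (al%:E <= alphabar z P J g)%E
    = (lo P <= (z P + al * g)%:E)%E && ((z J - al * g)%:E <= up J)%E.
Proof.
move=> g_lt0; rewrite /alphabar ltNge (ltW g_lt0) g_lt0 /=.
rewrite lee_pdivlMr ?normr_gt0 ?ltr0_neq0 // -EFinM le_min lee_EFin_subr lee_EFin_subl.
by rewrite ltr0_norm // mulrN opprK.
Qed.

Lemma alphabar_le_pos z P J g al : 0 < g ->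
  (alphabar z P J g <= al%:E)%E
    = (up P <= (z P + al * g)%:E)%E || ((z J - al * g)%:E <= lo J)%E.
Proof.
by move=> g_gt0; rewrite /alphabar g_gt0 lee_pdivrMr // -EFinM ge_min lee_subl_EFin lee_subr_EFin.
Qed.

Lemma alphabar_le_neg z P J g al : g < 0 ->
  (alphabar z P J g <= al%:E)%E
    = ((z P + al * g)%:E <= lo P)%E || (up J <= (z J - al * g)%:E)%E.
Proof.
move=> g_lt0; rewrite /alphabar ltNge (ltW g_lt0) g_lt0 /=.
rewrite lee_pdivrMr ?normr_gt0 ?ltr0_neq0 // -EFinM ge_min lee_subr_EFin lee_subl_EFin.
by rewrite ltr0_norm // mulrN opprK.
Qed.

Lemma alphabar_ge0 z P J g : feasible z -> (0 <= alphabar z P J g)%E.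
Proof.
move=> [_ z_in]; have /andP[_ zP_up] := z_in P; have /andP[loJ_z _] := z_in J.
have /andP[loP_z _] := z_in P; have /andP[_ zJ_up] := z_in J.
case: (ltrgtP g 0) => [g_lt0|g_gt0|->]; last by rewrite /alphabar ltxx.
- by rewrite (le_alphabar_neg _ _ _ 0 g_lt0) mul0r addr0 subr0 loP_z zJ_up.
- by rewrite (le_alphabar_pos _ _ _ 0 g_gt0) mul0r addr0 subr0 zP_up loJ_z.
Qed.

Lemma move_coord z P J s q :
  vadd z (vscale s (dirv P J)) q = z q + s * ((q == P)%:R - (q == J)%:R).
Proof. by rewrite /vadd /vscale dirv_coord. Qed.

Lemma feasible_move z P J s : feasible z -> P != J ->
  (lo P <= (z P + s)%:E <= up P)%E -> (lo J <= (z J - s)%:E <= up J)%E ->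
  feasible (vadd z (vscale s (dirv P J))).
Proof.
move=> [z_sum z_in] PJ P_in J_in; split.
  by rewrite big_split /= z_sum -mulr_sumr sum_dirv mulr0 addr0.
move=> q; rewrite move_coord.
have [->|qP] := eqVneq q P; first by rewrite (negbTE PJ) subr0 mulr1.
have [->|qJ] := eqVneq q J; first by rewrite sub0r mulrN1.
by rewrite subrr mulr0 addr0.
Qed.

Lemma feasible_step z P J g al : feasible z -> 0 <= al ->
  (al%:E <= alphabar z P J g)%E -> feasible (vadd z (vscale (al * g) (dirv P J))).
Proof.
move=> z_feas al_ge0; have [_ z_in] := z_feas.
have [->|PJ] := eqVneq P J.
  by move=> _; have -> : vadd z (vscale (al * g) (dirv J J)) = z
    by apply/funext => q; rewrite move_coord subrr mulr0 addr0.
have /andP[loP_z zP_up] := z_in P; have /andP[loJ_z zJ_up] := z_in J.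
case: (ltrgtP g 0) => [g_lt0|g_gt0|->]; last first.
- by move=> _; apply: feasible_move; rewrite // mulr0 ?addr0 ?subr0 ?loP_z ?loJ_z.
- have s_ge0 : 0 <= al * g by rewrite mulr_ge0 // ltW.
  rewrite le_alphabar_pos // => /andP[P_up lo_J].
  apply: feasible_move; rewrite ?P_up ?lo_J ?andbT //.
  + by apply: le_trans loP_z _; rewrite lee_fin lerDl.
  + by apply: le_trans zJ_up; rewrite lee_fin gerDl oppr_le0.
- have s_le0 : al * g <= 0 by rewrite mulr_ge0_le0 // ltW.
  rewrite le_alphabar_neg // => /andP[lo_P J_up].
  apply: feasible_move; rewrite ?lo_P ?J_up ?andbT //.
  + by apply: le_trans zP_up; rewrite lee_fin gerDl.
  + by apply: le_trans loJ_z _; rewrite lee_fin lerDl oppr_ge0.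
Qed.

(* A full step that leaves [J] strictly inside its box stops [P] at the bound it moves towards. *)
Lemma full_step_hits_bound z P J g al y :
  (alphabar z P J g <= al%:E)%E -> (lo J < (z J - al * g)%:E < up J)%E ->
  feasible y -> 0 <= g * (z P + al * g - y P).
Proof.
move=> full /andP[lo_J J_up] [_ y_in]; have /andP[loP_y yP_up] := y_in P.
case: (ltrgtP g 0) => [g_lt0|g_gt0|->]; last by rewrite mul0r.
- move: full; rewrite alphabar_le_neg // => /orP[P_lo|]; last by rewrite leNgt J_up.
  apply: mulr_le0; first exact: ltW.
  by rewrite subr_le0 -lee_fin (le_trans P_lo loP_y).
- move: full; rewrite alphabar_le_pos // => /orP[up_P|]; last by rewrite leNgt lo_J.
  apply: mulr_ge0; first exact: ltW.
  by rewrite subr_ge0 -lee_fin (le_trans yP_up up_P).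
Qed.

End Move.

Section RealFacts.
Context {R : realType}.

Lemma fine_min_EFin (e : \bar R) (a : R) : (0 <= e)%E -> 0 <= a ->
  let t := fine (Order.min e a%:E) in
  [/\ 0 <= t, t <= a, (t%:E <= e)%E & t = a \/ (e <= t%:E)%E].
Proof.
case: e => [r| |] //= r_ge0 a_ge0; last by split; rewrite ?leey //; left.
rewrite -EFin_min /= !lee_fin le_min ge_min lexx orbT ge_min lexx.
rewrite lee_fin in r_ge0; rewrite r_ge0 a_ge0; split => //.
by case: (leP r a) => _; [right | left].
Qed.

Lemma armijo_fail_lower (L gamma t q F F0 : R) : 0 < q -> 0 <= t ->
  F <= F0 - t * q + L * t ^+ 2 * q / 2 -> F0 - gamma * t * q < F ->
  2 * (1 - gamma) < L * t.
Proof.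
move=> q_gt0 t_ge0 descent fail.
have t_gt0 : 0 < t by rewrite lt_neqAle t_ge0 andbT; apply/eqP => t0; move: fail descent; rewrite -t0; lra.
have : 2 * (1 - gamma) * (t * q) < L * t * (t * q) by move: fail descent; nra.
by rewrite ltr_pM2r ?mulr_gt0.
Qed.

Lemma ler_norm_scale (g al c : R) : 0 <= al -> 1 <= c * al -> `|g| <= c * `|al * g|.
Proof.
by move=> al_ge0 calg; rewrite normrM (ger0_norm al_ge0) mulrA ler_peMl.
Qed.

Lemma sqr_gap_rate (gamma Au m K D S dF : R) : 0 < gamma -> 0 < Au -> 1 <= m ->
  0 <= D <= K * S -> gamma / Au * S ^+ 2 <= dF ->
  gamma * D ^+ 2 / (Au * m * K ^+ 2) <= dF.
Proof.
move=> gamma_gt0 Au_gt0 m_ge1 /andP[D_ge0 D_le] decrease.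
have m_gt0 : 0 < m := lt_le_trans ltr01 m_ge1.
have dF_ge0 : 0 <= dF by apply: le_trans decrease; rewrite mulr_ge0 ?divr_ge0 ?sqr_ge0 ?ltW.
have [->|K_neq0] := eqVneq K 0; first by rewrite expr0n mulr0 invr0 mulr0.
have D2_le : D ^+ 2 <= K ^+ 2 * S ^+ 2 by rewrite -exprMn ler_sqr ?nnegrE // (le_trans D_ge0).
have K2_gt0 : 0 < K ^+ 2 by rewrite exprn_even_gt0.
apply: le_trans decrease; rewrite ler_pdivrMr; last by rewrite mulr_gt0 // mulr_gt0.
have -> : gamma / Au * S ^+ 2 * (Au * m * K ^+ 2) = gamma * (K ^+ 2 * S ^+ 2) * m.
  by field; rewrite gt_eqF.
by rewrite -mulrA ler_pM2l // (le_trans D2_le) // ler_peMr // mulr_ge0 ?sqr_ge0.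
Qed.

End RealFacts.

Section AC2CD.
Context {R : realType} {n : nat} (f : ('I_n -> R) -> R) (grad : ('I_n -> R) -> 'I_n -> R)
  (b : R) (lo up : 'I_n -> \bar R) (Lc : 'I_n -> 'I_n -> R)
  (tau gamma delta Al Au : R)
  (x : nat -> 'I_n -> R) (j : nat -> 'I_n) (p : nat -> 'I_n -> 'I_n)
  (z : nat -> nat -> 'I_n -> R) (A alpha : nat -> nat -> R).
Local Notation vec := ('I_n -> R).
Local Notation dirv := (@dirv R n).
Local Notation feasible := (feasible b lo up).
Hypothesis f_grad : is_gradient f grad.
Hypothesis f_convex : convex_fun f.
Hypothesis Lc_pair : pair_lip_consts grad Lc.
Hypothesis gamma_01 : 0 < gamma < 1.
Hypothesis delta_01 : 0 < delta < 1.
Hypothesis Al_gt0 : 0 < Al.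
Hypothesis Al_le_Au : Al <= Au.
Hypothesis run : AC2CD_run lo up f grad tau gamma delta Al Au x j p z A alpha.

(* Inner iterations are numbered from [0]: [gdir k i] and [trial k i] are the paper's
   [g^{k,i+1}] and [Delta^{k,i+1}], and [z k i.+1] is [z k i] moved by [slen k i] along
   [e_(p k i) - e_(j k)]. *)
Definition gdir k (i : 'I_n) := grad (z k i) (j k) - grad (z k i) (p k i).
Definition slen k (i : 'I_n) := alpha k i * gdir k i.
Definition trial k (i : 'I_n) :=
  fine (Order.min (alphabar lo up (z k i) (p k i) (j k) (gdir k i)) (A k i)%:E).
Definition step_const := Num.max Al^-1 (Lmax Lc / (2 * delta * (1 - gamma))).

Lemma p_inj k : injective (p k). Proof. by have [_ []] := run k. Qed.
Lemma z0 k : z k 0%N = x k. Proof. by have [_ [_ []]] := run k. Qed.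
Lemma x_succ k : x k.+1 = z k n. Proof. by have [_ [_ [_ []]]] := run k. Qed.

Lemma z_succ k (i : 'I_n) : z k i.+1 = vadd (z k i) (vscale (slen k i) (dirv (p k i) (j k))).
Proof.
have [_ [_ [_ [_ [/(_ i) [_ [_ ->]] _]]]]] := run k.
by apply/funext => q; rewrite /vadd /vscale /slen mulrA.
Qed.

Lemma A_bounds k (i : 'I_n) : Al <= A k i <= Au.
Proof. by have [_ [_ [_ [_ [/(_ i) []]]]]] := run k. Qed.

Lemma z_j_interior k (i : nat) : (i <= n)%N -> (lo (j k) < (z k i (j k))%:E < up (j k))%E.
Proof. by have [_ [_ [_ [_ [_ ]]]]] := run k; apply. Qed.

Lemma armijoE k (i : 'I_n) (a : R) :
  armijo f grad gamma (z k i) (vscale (gdir k i) (dirv (p k i) (j k))) a <->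
  f (vadd (z k i) (vscale (a * gdir k i) (dirv (p k i) (j k))))
    <= f (z k i) - gamma * a * gdir k i ^+ 2.
Proof.
rewrite /armijo dotvZr dotv_dirv.
have -> : vadd (z k i) (vscale a (vscale (gdir k i) (dirv (p k i) (j k))))
  = vadd (z k i) (vscale (a * gdir k i) (dirv (p k i) (j k))).
  by apply/funext => q; rewrite /vadd /vscale mulrA.
have -> : gdir k i * (grad (z k i) (p k i) - grad (z k i) (j k)) = - gdir k i ^+ 2.
  by rewrite /gdir; ring.
by rewrite mulrN addrC.
Qed.

Lemma stepsize k (i : 'I_n) : exists m,
  [/\ alpha k i = trial k i * delta ^+ m,
      f (z k i.+1) <= f (z k i) - gamma * alpha k i * gdir k i ^+ 2 &
      forall m', (m' < m)%N -> f (z k i) - gamma * (trial k i * delta ^+ m') * gdir k i ^+ 2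
        < f (vadd (z k i) (vscale (trial k i * delta ^+ m' * gdir k i) (dirv (p k i) (j k))))].
Proof.
have [_ [_ [_ [_ [/(_ i) [_ [[m [alphaE [arm fail]]] _]] _]]]]] := run k.
exists m; split => [//||m' m'm].
  by rewrite z_succ; apply/armijoE.
by rewrite ltNge; apply/negP => /armijoE; apply: fail.
Qed.

Lemma Lc_ge0 (P J : 'I_n) : 0 <= Lc P J.
Proof.
have [Lc_gt0 [Lc_diag _]] := Lc_pair.
by have [->|PJ] := eqVneq P J; [rewrite Lc_diag | exact/ltW/Lc_gt0].
Qed.

Lemma Lc_le_Lmax (P J : 'I_n) : Lc P J <= Lmax Lc.
Proof. exact: le_trans (le_bigmax _ (fun J => Lc P J) J) (le_bigmax _ _ P). Qed.

Lemma descent_pair (P J : 'I_n) (v : vec) (s : R) : P != J ->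
  f (vadd v (vscale s (dirv P J))) <= f v + s * (grad v P - grad v J) + Lc P J * s ^+ 2 / 2.
Proof.
move=> PJ; have [_ [_ Lc_lip]] := Lc_pair.
by rewrite -dotv_dirv; apply: descent_lemma => // y s0 t0; apply: Lc_lip.
Qed.

Lemma inv_Al_le_step_const : Al^-1 <= step_const.
Proof. by rewrite le_max lexx. Qed.

Lemma Lmax_ratio_le_step_const : Lmax Lc / (2 * delta * (1 - gamma)) <= step_const.
Proof. by rewrite le_max lexx orbT. Qed.

Lemma step_const_ge0 : 0 <= step_const.
Proof. by rewrite (le_trans _ inv_Al_le_step_const) // invr_ge0 ltW. Qed.

Lemma z_succ_coord k (i q : 'I_n) :
  z k i.+1 q = z k i q + slen k i * ((q == p k i)%:R - (q == j k)%:R).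
Proof. by rewrite z_succ move_coord. Qed.

Lemma f_z_succ_le k (i : 'I_n) :
  f (z k i.+1) <= f (z k i) - gamma * alpha k i * gdir k i ^+ 2.
Proof. by have [m [_ ? _]] := stepsize k i. Qed.

Section InnerStep.
Variables (k : nat) (i : 'I_n).
Hypothesis z_feas : feasible (z k i).
Local Notation P := (p k i).
Local Notation J := (j k).
Local Notation abar := (alphabar lo up (z k i) P J (gdir k i)).

Lemma trial_spec :
  [/\ 0 <= trial k i, trial k i <= A k i, ((trial k i)%:E <= abar)%E
    & trial k i = A k i \/ (abar <= (trial k i)%:E)%E].
Proof.
apply: fine_min_EFin; first exact: alphabar_ge0 z_feas.
by have /andP[Al_A _] := A_bounds k i; rewrite (le_trans (ltW Al_gt0)).
Qed.

Lemma alpha_bounds : 0 <= alpha k i <= trial k i.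
Proof.
have [m [-> _ _]] := stepsize k i; have [t_ge0 _ _ _] := trial_spec.
have /andP[/ltW d_ge0 d_lt1] := delta_01.
by rewrite mulr_ge0 ?exprn_ge0 //= ler_piMr ?exprn_ge0 // exprn_ile1 // ltW.
Qed.

Lemma alpha_le_Au : alpha k i <= Au.
Proof.
have /andP[_ a_t] := alpha_bounds; have [_ t_A _ _] := trial_spec.
by have /andP[_ A_Au] := A_bounds k i; rewrite (le_trans a_t) // (le_trans t_A).
Qed.

Lemma feasible_z_succ : feasible (z k i.+1).
Proof.
have /andP[a_ge0 a_t] := alpha_bounds; have [_ _ t_abar _] := trial_spec.
rewrite z_succ; apply: feasible_step => //.
by apply: le_trans t_abar; rewrite lee_fin.
Qed.

Lemma backtracked_alpha_long : P != J -> alpha k i < trial k i -> 1 <= step_const * alpha k i.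
Proof.
move=> PJ a_lt; have [[|m] [alphaE _ fail]] := stepsize k i.
  by move: a_lt; rewrite alphaE expr0 mulr1 ltxx.
set t := trial k i * delta ^+ m; have := fail m (ltnSn m); rewrite -/t.
have [->|g_neq0] := eqVneq (gdir k i) 0.
  have -> : vadd (z k i) (vscale (t * 0) (dirv P J)) = z k i.
    by apply/funext => q; rewrite move_coord mulr0 mul0r addr0.
  by rewrite expr0n mulr0 subr0 ltxx.
have t_ge0 : 0 <= t.
  by have [t_ge0 _ _ _] := trial_spec; rewrite mulr_ge0 // exprn_ge0 // ltW; case/andP: delta_01.
have descent : f (vadd (z k i) (vscale (t * gdir k i) (dirv P J)))
    <= f (z k i) - t * gdir k i ^+ 2 + Lc P J * t ^+ 2 * gdir k i ^+ 2 / 2.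
  apply: le_trans (descent_pair _ _ PJ) _.
  have -> : grad (z k i) P - grad (z k i) J = - gdir k i by rewrite /gdir opprB.
  by rewrite le_eqVlt; apply/orP; left; apply/eqP; ring.
have g2_gt0 : 0 < gdir k i ^+ 2 by rewrite exprn_even_gt0.
move=> /(armijo_fail_lower g2_gt0 t_ge0 descent) bound.
have /andP[d_gt0 _] := delta_01; have /andP[_ g_lt1] := gamma_01.
have -> : alpha k i = t * delta by rewrite alphaE exprSr mulrA.
apply: le_trans (ler_wpM2r _ Lmax_ratio_le_step_const); last by rewrite mulr_ge0 // ltW.
rewrite mulrAC ler_pdivlMr ?mulr_gt0 ?subr_gt0 // mul1r.
have : Lc P J * t <= Lmax Lc * t by rewrite ler_wpM2r ?Lc_le_Lmax.
by move: bound; nra.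
Qed.

Lemma first_trial_long_or_hit : P != J -> alpha k i = trial k i ->
  1 <= step_const * alpha k i \/
  forall y, feasible y -> 0 <= gdir k i * (z k i.+1 P - y P).
Proof.
move=> PJ a_trial; have [_ _ _ [tA|full]] := trial_spec.
  left; rewrite a_trial tA; have /andP[Al_A _] := A_bounds k i.
  apply: le_trans (ler_wpM2r (ltW (lt_le_trans Al_gt0 Al_A)) inv_Al_le_step_const).
  by rewrite ler_pdivlMl // mulr1.
right => y y_feas; rewrite z_succ_coord eqxx (negbTE PJ) subr0 mulr1 /slen.
apply: (full_step_hits_bound (J := J) _ _ y_feas); first by rewrite a_trial.
by have := z_j_interior k (ltn_ord i); rewrite z_succ_coord eqxx eq_sym (negbTE PJ) sub0r mulrN1.
Qed.

(* The second alternative says that [p k i] has stopped at the bound it moves towards. *)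
Lemma gdir_le_slen_or_hit : P != J ->
  `|gdir k i| <= step_const * `|slen k i| \/
  forall y, feasible y -> 0 <= gdir k i * (z k i.+1 P - y P).
Proof.
move=> PJ; have /andP[a_ge0 a_le] := alpha_bounds.
have long_le : 1 <= step_const * alpha k i -> `|gdir k i| <= step_const * `|slen k i|.
  exact: ler_norm_scale.
move: a_le; rewrite le_eqVlt => /orP[/eqP a_trial|a_lt].
  by case: (first_trial_long_or_hit PJ a_trial) => [/long_le|]; [left|right].
by left; apply/long_le/backtracked_alpha_long.
Qed.

End InnerStep.

Lemma feasible_z k : feasible (x k) ->
  forall i, (i <= n)%N -> feasible (z k i) /\ f (z k i) <= f (x k).
Proof.
move=> xk_feas; elim=> [|i IH] i_le; first by rewrite z0.
have [zi_feas zi_le] := IH (ltnW i_le); pose i' := Ordinal i_le.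
split; first exact: (feasible_z_succ (i := i')).
apply: le_trans (f_z_succ_le k i') _; apply: le_trans zi_le.
have /andP[a_ge0 _] := (alpha_bounds (i := i') zi_feas); have /andP[/ltW ? _] := gamma_01.
by rewrite gerDl oppr_le0; apply: mulr_ge0; [exact: mulr_ge0 | exact: sqr_ge0].
Qed.

Lemma feasible_x : feasible (x 0%N) -> forall k, feasible (x k) /\ f (x k) <= f (x 0%N).
Proof.
move=> x0_feas; elim=> [//|k [xk_feas xk_le]].
have [] := feasible_z xk_feas (leqnn n); rewrite -x_succ => ? ?.
by split => //; apply: le_trans xk_le.
Qed.

Lemma outer_decrease k : feasible (x k) ->
  gamma / Au * \sum_(t < n) slen k t ^+ 2 <= f (x k) - f (x k.+1).
Proof.
move=> xk_feas; have Au_gt0 : 0 < Au := lt_le_trans Al_gt0 Al_le_Au.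
have -> : f (x k) - f (x k.+1) = - (f (z k n) - f (z k 0%N)) by rewrite -z0 x_succ opprB.
rewrite -(telescope_sumr (fun t => f (z k t)) (leq0n n)) -sumrN big_mkord mulr_sumr.
apply: ler_sum => t _; rewrite opprB.
have [zt_feas _] := feasible_z xk_feas (ltnW (ltn_ord t)).
have /andP[a_ge0 _] := alpha_bounds zt_feas; have a_le := alpha_le_Au zt_feas.
have /andP[g_gt0 _] := gamma_01; have := f_z_succ_le k t.
have : gamma / Au * slen k t ^+ 2 <= gamma * alpha k t * gdir k t ^+ 2.
  have Au_neq0 : Au != 0 by rewrite gt_eqF.
  have -> : gamma / Au * slen k t ^+ 2
    = gamma * gdir k t ^+ 2 / Au * alpha k t * alpha k t by rewrite /slen; field.
  have -> : gamma * alpha k t * gdir k t ^+ 2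
    = gamma * gdir k t ^+ 2 / Au * alpha k t * Au by field.
  apply: ler_wpM2l => //; apply: mulr_ge0 => //.
  by apply: divr_ge0; [apply: mulr_ge0; [exact: ltW | exact: sqr_ge0] | exact: ltW].
lra.
Qed.

Lemma z_coord_fixed k (m : 'I_n) (t : nat) : p k m != j k -> (m < t <= n)%N ->
  z k t (p k m) = z k m.+1 (p k m).
Proof.
move=> pm_j; elim: t => [//|t IH] /andP[m_lt t_le].
have [->//|t_neq] := eqVneq t m.
have m_lt_t : (m < t)%N by rewrite ltn_neqAle eq_sym t_neq -ltnS.
rewrite -IH ?m_lt_t ?(ltnW t_le) // (z_succ_coord k (Ordinal t_le)) /=.
have -> : (p k m == p k (Ordinal t_le)) = false.
  by apply/negbTE/negP => /eqP /p_inj /(congr1 val) /= tm; rewrite tm eqxx in t_neq.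
by rewrite (negbTE pm_j) subrr mulr0 addr0.
Qed.

(* Co-coercivity along [e_i - e_j] bounds the squared change by the Bregman gap of the step,
   which the descent lemma along [e_(p t) - e_j] bounds in turn. *)
Lemma grad_gap_step k (i t : 'I_n) : i != j k ->
  `|(grad (z k t.+1) i - grad (z k t.+1) (j k)) - (grad (z k t) i - grad (z k t) (j k))|
    <= Num.sqrt (Lc i (j k)) * (Num.sqrt (Lc (p k t) (j k)) * `|slen k t|).
Proof.
move=> ij; have [Lc_gt0 [_ Lc_lip]] := Lc_pair.
have rhs_ge0 : 0 <= Num.sqrt (Lc i (j k)) * (Num.sqrt (Lc (p k t) (j k)) * `|slen k t|).
  by rewrite !mulr_ge0 ?sqrtr_ge0.
have [ptj|ptj] := eqVneq (p k t) (j k).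
  have -> : z k t.+1 = z k t.
    by apply/funext => q; rewrite z_succ_coord ptj subrr mulr0 addr0.
  by rewrite subrr normr0.
rewrite -ler_sqr ?nnegrE // real_normK ?num_real //.
rewrite -(dotv_dirv (grad (z k t.+1))) -(dotv_dirv (grad (z k t))).
apply: le_trans (sqr_dgrad_le_bregman f_grad f_convex
  (fun y s0 t0 => Lc_lip i (j k) y s0 t0 ij) _ _ (Lc_gt0 _ _ ij)) _.
have -> : vsub (z k t.+1) (z k t) = vscale (slen k t) (dirv (p k t) (j k)).
  by apply/funext => q; rewrite z_succ /vsub /vadd addrC addKr.
have := descent_pair (z k t) (slen k t) ptj; rewrite -z_succ dotvZr dotv_dirv => descent.
rewrite !exprMn !sqr_sqrtr ?Lc_ge0 // real_normK ?num_real //.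
have -> : Lc i (j k) * (Lc (p k t) (j k) * slen k t ^+ 2)
  = 2 * Lc i (j k) * (Lc (p k t) (j k) * slen k t ^+ 2 / 2) by field.
apply: ler_wpM2l; first by rewrite mulr_ge0 ?Lc_ge0.
by move: descent; rewrite -mulrA; set F := f _; lra.
Qed.

Definition gsum k (u : nat) :=
  \sum_(t < n | (t < u)%N) Num.sqrt (Lc (p k t) (j k)) * `|slen k t|.

Lemma gsum_ge0 k u : 0 <= gsum k u.
Proof. by apply: sumr_ge0 => t _; rewrite mulr_ge0 ?sqrtr_ge0. Qed.

Lemma gsumS k (t : 'I_n) :
  gsum k t.+1 = gsum k t + Num.sqrt (Lc (p k t) (j k)) * `|slen k t|.
Proof.
rewrite /gsum (bigD1 t) //= addrC; congr (_ + _); apply: eq_bigl => q.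
by rewrite ltnS -val_eqE andbC -ltn_neqAle.
Qed.

Lemma grad_gap_drift k (i : 'I_n) (m u : nat) : i != j k -> (m <= u <= n)%N ->
  `|(grad (z k u) i - grad (z k u) (j k)) - (grad (z k m) i - grad (z k m) (j k))|
    <= Num.sqrt (Lc i (j k)) * gsum k u.
Proof.
move=> ij; have rhs_ge0 u' : 0 <= Num.sqrt (Lc i (j k)) * gsum k u'.
  by rewrite mulr_ge0 ?sqrtr_ge0 ?gsum_ge0.
elim: u => [|u IH] /andP[m_le u_le].
  by move: m_le; rewrite leqn0 => /eqP ->; rewrite subrr normr0.
have [->|m_neq] := eqVneq m u.+1; first by rewrite subrr normr0.
have m_le_u : (m <= u)%N by rewrite -ltnS ltn_neqAle m_neq.
rewrite (gsumS k (Ordinal u_le)) mulrDr.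
set a := fun v : nat => grad (z k v) i - grad (z k v) (j k).
rewrite -/(a u.+1) -/(a m) -(subrK (a u) (a u.+1)) -addrA [leRHS]addrC.
apply: le_trans (ler_normD _ _) (lerD _ _); first exact: (grad_gap_step (Ordinal u_le) ij).
by apply: IH; rewrite m_le_u ltnW.
Qed.

(* At [i = p k m] the iterate [x k.+1] agrees with [z k m.+1], and its gradient gap is
   [- gdir k m] plus the drift accumulated after inner step [m]. *)
Lemma pair_term_le k (xs : vec) (m : 'I_n) : feasible (x k) -> feasible xs ->
  p k m != j k ->
  (grad (x k.+1) (p k m) - grad (x k.+1) (j k)) * (x k.+1 (p k m) - xs (p k m)) <=
    (`|(grad (z k n) (p k m) - grad (z k n) (j k))
        - (grad (z k m) (p k m) - grad (z k m) (j k))|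
      + step_const * `|slen k m|) * `|x k.+1 (p k m) - xs (p k m)|.
Proof.
move=> xk_feas xs_feas pm_j; set i := p k m; set y := x k.+1.
have [zm_feas _] := feasible_z xk_feas (ltnW (ltn_ord m)).
have y_i : y i = z k m.+1 i by rewrite /y x_succ z_coord_fixed // ltn_ord leqnn.
rewrite {1 2}/y x_succ; set d := y i - xs i.
set drift := (grad (z k n) i - _) - (grad (z k m) i - _).
have -> : grad (z k n) i - grad (z k n) (j k) = drift - gdir k m by rewrite /drift /gdir; ring.
clearbody drift; rewrite (mulrBl d drift) [leRHS]mulrDl; apply: lerD; first by rewrite -normrM ler_norm.
have Cs_ge0 : 0 <= step_const * `|slen k m| * `|d| by rewrite !mulr_ge0 ?step_const_ge0.
rewrite -mulNr; case: (gdir_le_slen_or_hit zm_feas pm_j) => [g_le|hit].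
  apply: le_trans (ler_wpM2r (normr_ge0 _) g_le).
  by rewrite -[`|gdir k m|]normrN -normrM ler_norm.
by apply: le_trans _ Cs_ge0; rewrite mulNr oppr_le0 /d y_i; apply: hit.
Qed.

Lemma gsum_le k :
  gsum k n <= Num.sqrt (Lcol Lc (j k)) * Num.sqrt (\sum_(t < n) slen k t ^+ 2).
Proof.
have -> : gsum k n = \sum_(t < n) `|Num.sqrt (Lc (p k t) (j k))| * `|slen k t|.
  by apply: eq_big => [t|t _]; rewrite ?ltn_ord // (ger0_norm (sqrtr_ge0 _)).
apply: le_trans (cauchy_schwarz_abs _ _ _) _; apply: ler_wpM2r; first exact: sqrtr_ge0.
rewrite ler_sqrt; last by apply: sumr_ge0 => i _; exact: Lc_ge0.
rewrite /Lcol [leRHS](reindex_inj (p_inj (k := k))) /=.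
by rewrite le_eqVlt; apply/orP; left; apply/eqP; apply: eq_bigr => t _; rewrite sqr_sqrtr ?Lc_ge0.
Qed.

Definition pinv k := invF (p_inj (k := k)).

Lemma drift_norm_le k :
  Num.sqrt (\sum_(i | i != j k) ((grad (z k n) i - grad (z k n) (j k))
      - (grad (z k (pinv k i)) i - grad (z k (pinv k i)) (j k))) ^+ 2)
    <= Lcol Lc (j k) * Num.sqrt (\sum_(t < n) slen k t ^+ 2).
Proof.
have Lcol_ge0 : 0 <= Lcol Lc (j k) by apply: sumr_ge0 => i _; exact: Lc_ge0.
apply: le_trans (_ : _ <= Num.sqrt (Lcol Lc (j k) * gsum k n ^+ 2)) _.
  rewrite ler_sqrt; last by rewrite mulr_ge0 // sqr_ge0.
  apply: le_trans (_ : _ <= \sum_(i | i != j k) Lc i (j k) * gsum k n ^+ 2) _.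
    apply: ler_sum => i ij; rewrite -[Lc i (j k)]sqr_sqrtr ?Lc_ge0 // -exprMn.
    have rhs_ge0 : 0 <= Num.sqrt (Lc i (j k)) * gsum k n by rewrite mulr_ge0 ?sqrtr_ge0 ?gsum_ge0.
    rewrite -real_normK ?num_real // ler_sqr ?nnegrE //.
    by apply: grad_gap_drift; rewrite // leqnn andbT ltnW.
  rewrite -mulr_suml ler_wpM2r ?sqr_ge0 // /Lcol [leRHS](bigD1 (j k)) //=.
  by rewrite lerDr Lc_ge0.
rewrite sqrtrM // sqrtr_sqr ger0_norm ?gsum_ge0 //.
apply: le_trans (ler_wpM2l (sqrtr_ge0 _) (gsum_le k)) _.
by rewrite mulrA -expr2 sqr_sqrtr.
Qed.

Lemma grad_dot_gap_le k (xs : vec) : feasible (x k) -> feasible xs ->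
  dotv (grad (x k.+1)) (vsub (x k.+1) xs) <=
    (Lcol Lc (j k) + step_const) * normj (j k) (vsub (x k.+1) xs)
      * Num.sqrt (\sum_(t < n) slen k t ^+ 2).
Proof.
move=> xk_feas xs_feas; set J := j k; set y := x k.+1; set d := vsub y xs.
set S := Num.sqrt _; set N := normj J d.
have [y_feas _] := feasible_z xk_feas (leqnn n); rewrite -x_succ -/y in y_feas.
have p_pinv i : p k (pinv k i) = i := f_invF (p_inj (k := k)) i.
set E := fun i => (grad (z k n) i - grad (z k n) J)
  - (grad (z k (pinv k i)) i - grad (z k (pinv k i)) J).
rewrite (dotv_sum0 _ J (sum_vsub_feasible y_feas xs_feas)).
apply: le_trans (_ : _ <= \sum_(i | i != J) `|E i| * `|d i|
    + step_const * \sum_(i | i != J) `|slen k (pinv k i)| * `|d i|) _.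
  rewrite mulr_sumr -big_split /=; apply: ler_sum => i iJ.
  have := pair_term_le xk_feas xs_feas (m := pinv k i); rewrite p_pinv => /(_ iJ).
  by move=> term_le; apply: le_trans term_le _; rewrite mulrDl -mulrA.
have slen_perm : Num.sqrt (\sum_(i | i != J) slen k (pinv k i) ^+ 2) <= S.
  rewrite ler_sqrt; last by apply: sumr_ge0 => t _; exact: sqr_ge0.
  have -> : \sum_(t < n) slen k t ^+ 2 = \sum_i slen k (pinv k i) ^+ 2.
    by rewrite [RHS](reindex_inj (p_inj (k := k))); apply: eq_bigr => t _; rewrite /pinv invF_f.
  by rewrite [leRHS](bigD1 J) //= lerDr sqr_ge0.
have N_ge0 : 0 <= N := sqrtr_ge0 _.
have drift_le : \sum_(i | i != J) `|E i| * `|d i| <= Lcol Lc J * S * N.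
  exact: le_trans (cauchy_schwarz_abs _ _ _) (ler_wpM2r N_ge0 (drift_norm_le k)).
have step_le : \sum_(i | i != J) `|slen k (pinv k i)| * `|d i| <= S * N.
  exact: le_trans (cauchy_schwarz_abs _ _ _) (ler_wpM2r N_ge0 slen_perm).
have -> : (Lcol Lc J + step_const) * N * S = Lcol Lc J * S * N + step_const * (S * N).
  by ring.
exact: lerD drift_le (ler_wpM2l step_const_ge0 step_le).
Qed.

Section Gap.
Variables (fstar R0 Gstar : R).
Hypothesis x0_feas : feasible (x 0%N).
Hypothesis fstar_opt : is_opt_value b lo up f fstar.
Hypothesis R0_max : is_max_of (R0_set b lo up f grad (x 0%N)) R0.
Hypothesis Gstar_max : is_max_of (G_set b lo up grad) Gstar.

Lemma stationary_exists : exists xs, stationary b lo up grad xs.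
Proof. by have [[? [? [xs [_ [? _]]]]] _] := R0_max; exists xs. Qed.

Lemma Gstar_ge0 : 0 <= Gstar.
Proof.
have [xs xs_stat] := stationary_exists; have [_ Gstar_ub] := Gstar_max.
by apply: Gstar_ub; exists (j 0%N), (j 0%N), xs; rewrite subrr.
Qed.

(* Only [Lhat Lc * R0] of the term [2 * Lhat Lc * R0] of [K] is needed. *)
Lemma optimality_gap_le k :
  0 <= f (x k.+1) - fstar <=
    (step_const * R0 + 2 * Lhat Lc * R0 + Gstar) * Num.sqrt (\sum_(t < n) slen k t ^+ 2).
Proof.
have [xk_feas _] := feasible_x x0_feas k; have [y_feas y_le] := feasible_x x0_feas k.+1.
have [xs xs_stat] := stationary_exists; have [[_ R0_ub] [fstar_lb fstar_inf]] := (R0_max, fstar_opt).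
have xs_le_fstar : f xs <= fstar.
  apply/ler_addgt0Pr => e e_gt0; have [y' y'_feas y'_lt] := fstar_inf e e_gt0.
  by apply: le_trans (ltW y'_lt); apply: stationary_min xs_stat y'_feas.
rewrite subr_ge0 fstar_lb //=.
set N := normj (j k) (vsub (x k.+1) xs); set S := Num.sqrt _.
have N_le : N <= R0 by apply: R0_ub; exists (j k), (x k.+1), xs.
have N_ge0 : 0 <= N := sqrtr_ge0 _.
have Lcol_le : Lcol Lc (j k) <= Lhat Lc := le_bigmax _ (fun J => Lcol Lc J) (j k).
have Lcol_ge0 : 0 <= Lcol Lc (j k) by apply: sumr_ge0 => i _; exact: Lc_ge0.
have coef_le : (Lcol Lc (j k) + step_const) * N <= step_const * R0 + 2 * Lhat Lc * R0 + Gstar.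
  have := Gstar_ge0; have := step_const_ge0.
  have : Lcol Lc (j k) * N <= Lhat Lc * R0 by apply: ler_pM.
  have : step_const * N <= step_const * R0 by rewrite ler_wpM2l ?step_const_ge0.
  have := mulr_ge0 (le_trans Lcol_ge0 Lcol_le) (le_trans N_ge0 N_le).
  lra.
have := convex_grad_ineq f_grad f_convex (x k.+1) xs.
have S_ge0 : 0 <= S := sqrtr_ge0 _; have := ler_wpM2r S_ge0 coef_le.
have := grad_dot_gap_le xk_feas xs_stat.1; rewrite -/S -/N !dotvBr.
move: xs_le_fstar; set K := _ + Gstar; lra.
Qed.

End Gap.

End AC2CD.

Theorem proposition4 (R : realType) (n : nat)
  (f : ('I_n -> R) -> R) (grad : ('I_n -> R) -> 'I_n -> R)
  (b : R) (lo up : 'I_n -> \bar R) (Lc : 'I_n -> 'I_n -> R)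
  (tau gamma delta Al Au : R)
  (x : nat -> 'I_n -> R) (j : nat -> 'I_n) (p : nat -> 'I_n -> 'I_n)
  (z : nat -> nat -> 'I_n -> R) (A alpha : nat -> nat -> R)
  (fstar R0 Gstar : R) :
  (2 <= n)%N ->
  (forall i, lo i != +oo%E) -> (forall i, up i != -oo%E) ->
  (forall i, (lo i < up i)%E) ->
  is_gradient f grad -> lipschitz_grad grad ->
  pair_lip_consts grad Lc ->
  convex_fun f ->
  0 < tau <= 1 -> 0 < gamma < 1 -> 0 < delta < 1 -> 0 < Al -> Al <= Au ->
  feasible b lo up (x 0%N) ->
  (* L_0 is nonempty (it contains x^0) and compact *)
  (exists M : R, forall y, in_L0 b lo up f (x 0%N) y -> forall i, `|y i| <= M) ->
  (forall y, in_L0 b lo up f (x 0%N) y -> exists i, (lo i < (y i)%:E < up i)%E) ->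
  AC2CD_run lo up f grad tau gamma delta Al Au x j p z A alpha ->
  is_opt_value b lo up f fstar ->
  is_max_of (R0_set b lo up f grad (x 0%N)) R0 ->
  is_max_of (G_set b lo up grad) Gstar ->
  let K := Num.max (Al^-1) (Lmax Lc / (2 * delta * (1 - gamma))) * R0
           + 2 * Lhat Lc * R0 + Gstar in
  forall k : nat,
    gamma * (f (x k.+1) - fstar) ^+ 2 / (Au * (n - 1)%:R * K ^+ 2)
      <= f (x k) - f (x k.+1).
Proof.
move=> n_ge2 _ _ _ f_grad _ Lc_pair f_convex _ gamma_01 delta_01 Al_gt0 Al_le_Au x0_feas _ _
  run fstar_opt R0_max Gstar_max K k.
have [xk_feas _] := feasible_x gamma_01 delta_01 Al_gt0 run x0_feas k.
have [gamma_gt0 _] := andP gamma_01.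
have gap := optimality_gap_le f_grad f_convex Lc_pair gamma_01 delta_01 Al_gt0 run
     x0_feas fstar_opt R0_max Gstar_max k.
have dec := outer_decrease gamma_01 delta_01 Al_gt0 Al_le_Au run xk_feas.
rewrite -[X in _ * X <= _]sqr_sqrtr in dec; last by apply: sumr_ge0 => t _; exact: sqr_ge0.
apply: (sqr_gap_rate gamma_gt0 (lt_le_trans Al_gt0 Al_le_Au) _ gap dec).
by rewrite ler1n subn_gt0.
Qed.
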